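(* Let $(\mathbf C,I)$ be a finite-type based chain complex and let $M=\{\alpha\to\beta\}$ be a single $(n+1,n)$-pairing (so $\alpha\in I_{n+1}$, $\beta\in I_n$ and $\partial_{\beta,\alpha}$ is an isomorphism). Then $\operatorname{Im}\partial_n^M=\operatorname{Im}\partial_n$, where $\partial^M$ is the boundary of the Morse complex $\mathbf C^M$ (note $\mathbf C^M_{n-1}=\mathbf C_{n-1}$).
   Context: Based chain complex: chain complex $(\mathbf C,\partial)$ of finite-dimensional real vector spaces with disjoint finite index sets $I_n$ and $\mathbf C_n=\bigoplus_{\alpha\in I_n}C_\alpha$; $\partial_{\tau,\sigma}=\pi_\tau\partial i_\sigma:C_\sigma\to C_\tau$. For the single pairing $M=\{\alpha\to\beta\}$, the Morse complex $\mathbf C^M$ has summands $C_\sigma$ for $\sigma\in I\setminus\{\alpha,\beta\}$ and boundary components $\partial^M_{\tau,\sigma}=\partial_{\tau,\sigma}-\partial_{\tau,\alpha}\partial_{\beta,\alpha}^{-1}\partial_{\beta,\sigma}$. *)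

From HB Require Import structures.
From mathcomp Require Import all_boot all_order all_algebra.
From mathcomp Require Import reals.
Set Implicit Arguments. Unset Strict Implicit. Unset Printing Implicit Defensive.
Import Order.TTheory GRing.Theory Num.Theory.
Local Open Scope ring_scope.

(* Summands C_s (s : idx) are R^(cdim s) (row vectors); C_n = (+)_{cdeg s = n} C_s.
   [cbd s t] is the component partial_{t,s} : C_s -> C_t, acting on row vectors
   on the right (x |-> x *m cbd s t). *)
Record based_complex (R : realType) := BasedComplex {
  idx : finType;
  cdeg : idx -> int;
  cdim : idx -> nat;
  cbd : forall s t : idx, 'M[R]_(cdim s, cdim t);
  bd_deg : forall s t, cdeg t != cdeg s - 1 -> cbd s t = 0;
  bd_sq : forall s r, \sum_(t : idx) cbd s t *m cbd t r = 0
}.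

Definition bd_image (R : realType) (J : finType) (d : J -> nat) (dg : J -> int)
  (D : forall s t : J, 'M[R]_(d s, d t)) (n : int)
  (y : forall t : J, 'rV[R]_(d t)) : Prop :=
  exists x : forall s : J, 'rV[R]_(d s),
    (forall s, dg s != n -> x s = 0) /\
    (forall t, y t = \sum_(s : J) x s *m D s t).

(* Components partial^M_{t,s} = partial_{t,s} - partial_{t,a} partial_{b,a}^{-1} partial_{b,s}
   for the single pairing a -> b, where g = partial_{b,a}^{-1}. *)
Definition morse_bd (R : realType) (C : based_complex R) (a b : idx C)
  (g : 'M[R]_(cdim b, cdim a)) (s t : idx C) : 'M[R]_(cdim s, cdim t) :=
  cbd s t - cbd s b *m g *m cbd a t.

Definition morse_idx (R : realType) (C : based_complex R) (a b : idx C) : finType :=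
  {s : idx C | (s != a) && (s != b)}.

From HB Require Import structures.
From mathcomp Require Import all_boot all_order all_algebra.
From mathcomp Require Import reals.
From mathcomp Require Import zify.
Import Order.TTheory GRing.Theory Num.Theory.
Local Open Scope ring_scope.

(* For a degree-n chain [x] avoiding [a] and [b], the correction term of
   [morse_bd] vanishes, since [cbd s b] can only be nonzero in degree n + 1;
   so [x] has the same boundary in C and in C^M.  Any degree-n chain [x] can
   be brought into this form without changing its boundary by subtracting the
   boundary of the (n+1)-chain [x b *m g] placed at [a]: this kills the
   [b]-component because [g] inverts [cbd a b].  Conversely a chain of C^M
   extends by zero to a chain of C, and at [a] and [b] both sides vanish for
   degree reasons. *)

Section ExtendByZero.
Context {I : finType} {P : pred I} {V : I -> nmodType}.

Definition extend0 (x : forall u : {s | P s}, V (val u)) (s : I) : V s :=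
  (if P s as c return P s = c -> V s then fun h => x (exist _ s h)
   else fun _ => 0) erefl.

Lemma extend0_in x (s : I) (Ps : P s) : extend0 x s = x (exist _ s Ps).
Proof.
rewrite /extend0; move: erefl.
by rewrite {2 3}Ps => h; rewrite (bool_irrelevance h Ps).
Qed.

Lemma extend0_out x (s : I) : ~~ P s -> extend0 x s = 0.
Proof. by move=> /negbTE nPs; rewrite /extend0; move: erefl; rewrite {2 3}nPs. Qed.

End ExtendByZero.

Section SinglePairing.
Variables (R : realType) (C : based_complex R).

Lemma sum_bd_bd (r t : idx C) (z : 'rV[R]_(cdim r)) :
  \sum_s z *m cbd r s *m cbd s t = 0.
Proof.
under eq_bigr do rewrite -mulmxA.
by rewrite -mulmx_sumr bd_sq mulmx0.
Qed.

Variables (n : int) (a b : idx C) (g : 'M[R]_(cdim b, cdim a)).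
Hypotheses (ha : cdeg a = n + 1) (hb : cdeg b = n).

Local Notation chain := (forall s : idx C, 'rV[R]_(cdim s)).
Local Notation pair_free s := ((s != a) && (s != b)).
Local Notation image :=
  (@bd_image R (idx C) (@cdim R C) (@cdeg R C) (@cbd R C) n).
Local Notation morse_image :=
  (@bd_image R (morse_idx a b) (fun s => cdim (val s)) (fun s => cdeg (val s))
     (fun s t => morse_bd g (val s) (val t)) n).

Lemma sum_cbd_eq_morse (x : chain) :
    x a = 0 -> x b = 0 -> (forall s, cdeg s != n -> x s = 0) ->
  forall t, \sum_s x s *m cbd s t
            = \sum_(u : morse_idx a b) x (val u) *m morse_bd g (val u) t.
Proof.
move=> xa xb xn t.
rewrite (bigID (fun s => pair_free s)) /= addrC big1 ?add0r; last first.
  by move=> s; rewrite negb_and !negbK => /orP[]/eqP->; rewrite ?xa ?xb mul0mx.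
rewrite (big_sub [pred s | pair_free s]); apply: eq_bigr => u _.
have [us | /xn->] := eqVneq (cdeg (val u)) n; last by rewrite !mul0mx.
by rewrite /morse_bd (bd_deg (s := val u) (t := b)) ?mul0mx ?subr0 // hb us; lia.
Qed.

Lemma bd_image_sub_morse (y : chain) :
  g *m cbd a b = 1%:M -> image y -> morse_image (fun u => y (val u)).
Proof.
move=> hg2 [x [xn xy]].
pose x' s := x s - x b *m g *m cbd a s.
have cbd_a s : cdeg s != n -> cbd a s = 0.
  by move=> sn; apply: bd_deg; rewrite ha; move: sn => /eqP; lia.
have x'n s : cdeg s != n -> x' s = 0.
  by move=> sn; rewrite /x' xn // cbd_a // mulmx0 subrr.
have x'a : x' a = 0 by apply: x'n; rewrite ha; lia.
have x'b : x' b = 0 by rewrite /x' -mulmxA hg2 mulmx1 subrr.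
have x'y t : y t = \sum_s x' s *m cbd s t.
  by under eq_bigr do rewrite mulmxBl; rewrite sumrB sum_bd_bd subr0 xy.
exists (fun u => x' (val u)); split=> [u /x'n // | t].
by rewrite x'y sum_cbd_eq_morse.
Qed.

Lemma morse_image_sub_bd (y : chain) :
    (forall t, cdeg t != n - 1 -> y t = 0) ->
  morse_image (fun u => y (val u)) -> image y.
Proof.
move=> yn [x' [x'n x'y]].
pose x : chain := extend0 (V := fun s => 'rV[R]_(cdim s)) x'.
have xa : x a = 0 by rewrite /x extend0_out ?eqxx.
have xb : x b = 0 by rewrite /x extend0_out ?eqxx ?andbF.
have xn s : cdeg s != n -> x s = 0.
  move=> sn; have [Ps | nPs] := boolP (pair_free s).
    by rewrite /x (extend0_in _ s Ps) x'n.
  by rewrite /x extend0_out.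
exists x; split=> // t; have [Pt | Pt] := boolP (pair_free t).
  have /= -> := x'y (exist _ t Pt); rewrite sum_cbd_eq_morse //.
  by apply: eq_bigr => -[s Ps] _ /=; rewrite /x (extend0_in _ s Ps).
have tn : cdeg t != n - 1.
  by move: Pt; rewrite negb_and !negbK => /orP[]/eqP->; rewrite ?ha ?hb; lia.
rewrite yn // big1 // => s _; have [sn | /xn->] := eqVneq (cdeg s) n.
  by rewrite bd_deg ?mulmx0 // sn.
by rewrite mul0mx.
Qed.

End SinglePairing.

Theorem mainTheorem13 (R : realType) (C : based_complex R) (n : int)
  (a b : idx C) (g : 'M[R]_(cdim b, cdim a))
  (ha : cdeg a = n + 1) (hb : cdeg b = n)
  (hg1 : cbd a b *m g = 1%:M) (hg2 : g *m cbd a b = 1%:M)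
  (y : forall t : idx C, 'rV[R]_(cdim t))
  (hy : forall t, cdeg t != n - 1 -> y t = 0) :
  @bd_image R (idx C) (@cdim R C) (@cdeg R C) (@cbd R C) n y <->
  @bd_image R (morse_idx a b) (fun s : morse_idx a b => cdim (val s)) (fun s : morse_idx a b => cdeg (val s))
    (fun s t : morse_idx a b => morse_bd g (val s) (val t)) n
    (fun t : morse_idx a b => y (val t)).
Proof.
split; [exact: bd_image_sub_morse | exact: morse_image_sub_bd].
Qed.
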